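(* Let $X$, $Z$ be topological vector spaces, $C\subseteq Z$ a nonempty closed convex cone with $C^-\neq\{0\}$, $f:X\to\mathcal{F}(Z,C)$ and $x_0\in X$. If $f$ is lattice-bounded above on some neighborhood of $x_0$, then $f$ is efficient at $x_0$. If $\operatorname{Int}C\neq\emptyset$, then conversely efficiency of $f$ at $x_0$ implies that $f$ is lattice-bounded above on some neighborhood of $x_0$.
   Context: $\mathcal{F}(Z,C)=\{A\subseteq Z\colon A=\operatorname{cl}(A+C)\}$ (empty set included); $C^-=\{z^*\in Z^*\colon z^*(z)\le0\ \forall z\in C\}$. $f$ is lattice-bounded above on $M\subseteq X$ iff there is $a\in Z$ with $a\in f(x)$ for all $x\in M$. $f$ is efficient at $x_0$ iff there exist a neighborhood $U$ of $x_0$ and a bounded set $B\subseteq Z$ (absorbed by every neighborhood of $0$) with $f(x)\cap B\neq\emptyset$ for all $x\in U$. *)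

From HB Require Import structures.
From mathcomp Require Import all_boot all_order all_algebra.
From mathcomp Require Import all_classical all_reals all_analysis.
Set Implicit Arguments. Unset Strict Implicit. Unset Printing Implicit Defensive.
Import Order.TTheory GRing.Theory Num.Theory.
Local Open Scope classical_set_scope.
Local Open Scope ring_scope.

Section Defs.
Variables (R : realType).

Definition msum (Z : lmodType R) (A B : set Z) : set Z :=
  [set a + b | a in A & b in B].

Definition sdil (Z : lmodType R) (t : R) (V : set Z) : set Z :=
  [set t *: v | v in V].

Definition closed_convex_cone (Z : topologicalLmodType R) (C : set Z) : Prop :=
  closed C /\ convex_set (C : set (convex_lmodType Z)) /\
  (forall (t : R) (z : Z), 0 <= t -> C z -> C (t *: z)).

Definition dual_elt (Z : topologicalLmodType R) (zs : Z -> R) : Prop :=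
  (forall (a : R) (x y : Z), zs (a *: x + y) = a * zs x + zs y) /\
  continuous (zs : Z -> R^o).

Definition neg_dual_cone (Z : topologicalLmodType R) (C : set Z) (zs : Z -> R) : Prop :=
  dual_elt zs /\ (forall z, C z -> zs z <= 0).

Definition neg_dual_nontrivial (Z : topologicalLmodType R) (C : set Z) : Prop :=
  exists zs : Z -> R, neg_dual_cone C zs /\ exists z, zs z != 0.

Definition FZC (Z : topologicalLmodType R) (C : set Z) (A : set Z) : Prop :=
  A = closure (msum A C).

Definition lattice_bounded_above (X Z : topologicalLmodType R)
  (f : X -> set Z) (M : set X) : Prop :=
  exists a : Z, forall x, M x -> f x a.

Definition tvs_bounded (Z : topologicalLmodType R) (B : set Z) : Prop :=
  forall V : set Z, nbhs (0 : Z) V -> exists t : R, 0 < t /\ B `<=` sdil t V.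

Definition efficient_at (X Z : topologicalLmodType R)
  (f : X -> set Z) (x0 : X) : Prop :=
  exists U : set X, nbhs x0 U /\ exists B : set Z, tvs_bounded B /\
    (forall x, U x -> f x `&` B !=set0).

End Defs.

(* A single point is bounded, so an upper lattice bound [a] on a neighborhood
   of [x0] already witnesses efficiency with [B = {a}].  Conversely, if [c] is
   interior to [C] and [V] is a neighborhood of 0 with [c - V] inside [C], then
   [B] is contained in some [t V], and every [b] in [f x] with [b = t v] lies
   below [t c] since [t c - b = t (c - v)] is in [C]; as [f x] is closed
   upwards under [C], the point [t c] is a common element of all [f x] with [x] in [U]. *)
From HB Require Import structures.
From mathcomp Require Import all_boot all_order all_algebra.
From mathcomp Require Import all_classical all_reals all_analysis.
Set Implicit Arguments. Unset Strict Implicit. Unset Printing Implicit Defensive.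
Import Order.TTheory GRing.Theory Num.Theory.
Local Open Scope classical_set_scope.
Local Open Scope ring_scope.

Section TopologicalLmodule.
Variables (R : realType) (Z : topologicalLmodType R).

Lemma nbhs0_absorbs (a : Z) (V : set Z) :
  nbhs (0 : Z) V -> exists t : R, 0 < t /\ sdil t V a.
Proof.
move=> V0; have := @scale_continuous R Z (0, a) V.
rewrite /= scale0r => /(_ V0) [[A B] /= [/nbhs_ballP[e e0 eA] nB] AB].
have e2_gt0 : 0 < e / 2 by rewrite divr_gt0.
exists (e / 2)^-1; split; first by rewrite invr_gt0.
exists ((e / 2) *: a); last by rewrite scalerA mulVf ?gt_eqF // scale1r.
apply: (AB (e / 2, a)); split => //=; last exact: nbhs_singleton.
apply: eA; rewrite /ball /= sub0r normrN gtr0_norm //.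
by rewrite gtr_pMr // invf_lt1 // ltr1n.
Qed.

Lemma tvs_bounded_set1 (a : Z) : tvs_bounded [set a].
Proof.
move=> V /(nbhs0_absorbs a)[t [t_gt0 aV]].
by exists t; split => // _ ->.
Qed.

Lemma nbhs_subl (c : Z) (A : set Z) :
  nbhs c A -> exists V : set Z, nbhs (0 : Z) V /\ forall v, V v -> A (c - v).
Proof.
move=> cA; have := @add_continuous Z (c, 0) A.
rewrite /= addr0 => /(_ cA) [[A1 B] /= [cA1 nB] AB].
have := @opp_continuous Z 0 B; rewrite /= oppr0 => /(_ nB) nNB.
exists (-%R @^-1` B); split => // v Bv.
by apply: (AB (c, - v)); split => //=; exact: nbhs_singleton.
Qed.

Lemma FZC_addr (C A : set Z) (b d : Z) :
  FZC C A -> A b -> C d -> A (b + d).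
Proof. by move=> eqA Ab Cd; rewrite eqA; apply: subset_closure; exists b => //; exists d. Qed.

End TopologicalLmodule.

Section SetValuedMap.
Variables (R : realType) (X Z : topologicalLmodType R).
Variables (C : set Z) (f : X -> set Z) (x0 : X).

Lemma lattice_bounded_above_efficient (U : set X) :
  nbhs x0 U -> lattice_bounded_above f U -> efficient_at f x0.
Proof.
move=> x0U [a fUa]; exists U; split => //; exists [set a].
split; first exact: tvs_bounded_set1.
by move=> x Ux; exists a; split => //; exact: fUa.
Qed.

Hypotheses (C_cone : forall (t : R) (z : Z), 0 <= t -> C z -> C (t *: z))
           (fFZC : forall x, FZC C (f x)).

Lemma efficient_lattice_bounded_above :
  interior C !=set0 -> efficient_at f x0 ->
  exists U : set X, nbhs x0 U /\ lattice_bounded_above f U.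
Proof.
move=> [c cC] [U [x0U [B [bdB fUB]]]].
have [V [V0 cVC]] := nbhs_subl cC.
have [t [t_gt0 BtV]] := bdB V V0.
exists U; split => //; exists (t *: c) => x Ux.
have [b [fxb Bb]] := fUB x Ux.
have [v Vv tvb] := BtV b Bb.
have -> : t *: c = b + t *: (c - v) by rewrite scalerBr tvb addrC subrK.
apply: (FZC_addr (fFZC x) fxb).
by apply: C_cone; [exact: ltW | exact: cVC].
Qed.

End SetValuedMap.

Theorem mainTheorem5 (R : realType) (X Z : topologicalLmodType R)
  (C : set Z) (f : X -> set Z) (x0 : X) :
  C !=set0 -> closed_convex_cone C -> neg_dual_nontrivial C ->
  (forall x, FZC C (f x)) ->
  ((exists U : set X, nbhs x0 U /\ lattice_bounded_above f U) ->
     efficient_at f x0) /\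
  (interior C !=set0 -> efficient_at f x0 ->
     exists U : set X, nbhs x0 U /\ lattice_bounded_above f U).
Proof.
move=> _ [_ [_ C_cone]] _ fFZC; split.
  by move=> [U [x0U fU]]; exact: lattice_bounded_above_efficient x0U fU.
exact: efficient_lattice_bounded_above.
Qed.
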